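(* Let $n=2^m$ with $m\geq 3$. If $C\subseteq X^n$ is a diameter perfect code with minimum distance $5$ (i.e., any two distinct words of $C$ are at Hamming distance at least $5$, and there exists $A\subseteq X^n$ with all pairwise distances at most $4$ and $|C|\cdot|A|=|X^n|$), then $|C| = 2^{n-1}/n$.
   Context: $X^n$ is the set of words of length $n$ over $\{*,0,1\}$ containing exactly one $*$ (equivalently, ternary words of length $n$ and weight $n-1$), so $|X^n|=n2^{n-1}$. Hamming distance is the number of coordinates in which two words differ. A code $C\subseteq X^n$ with minimum distance $d$ is diameter perfect if there is a set $A\subseteq X^n$ of diameter at most $d-1$ with $|C|\cdot|A|=|X^n|$. *)

From mathcomp Require Import all_boot.
Set Implicit Arguments. Unset Strict Implicit. Unset Printing Implicit Defensive.

(* Words of length n over {0,1,*}; symbol 0 = 0, 1 = 1, 2 = *. *)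
Definition word (n : nat) := {ffun 'I_n -> 'I_3}.

Definition star : 'I_3 := inord 2.

Definition Xn (n : nat) : {set word n} :=
  [set w : word n | #|[set i | w i == star]| == 1].

Definition hdist (n : nat) (u v : word n) : nat := #|[set i | u i != v i]|.

Definition min_dist_ge (n d : nat) (C : {set word n}) : Prop :=
  forall u v, u \in C -> v \in C -> u != v -> d <= hdist u v.

Definition diam_le (n D : nat) (A : {set word n}) : Prop :=
  forall u v, u \in A -> v \in A -> hdist u v <= D.

Definition diameter_perfect (n d : nat) (C : {set word n}) : Prop :=
  C \subset Xn n /\ min_dist_ge d C /\
  exists A : {set word n}, A \subset Xn n /\ diam_le (d - 1) A /\
    #|C| * #|A| = #|Xn n|.

(* A word of X^n is determined by its star position s and the even set y of coordinates
   carrying a 1, together with the star when the number of 1s is odd.  This identifies X^n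
   with (even subsets of [n]) x [n], and the Hamming distance becomes
   |y Δ y' \ {s, s'}| + 2 [s <> s'].  Toggling one coordinate of y maps a code of minimum
   distance 5 injectively into the odd subsets, so |C| n <= 2^(n-1).  An anticode of
   diameter 4, translated so that a set carrying the most stars becomes empty, has all its
   sets of size 0, 2 or 4; counting them according to that maximal number of stars gives
   |A| < 2 n^2 when n = 8 or n >= 16.  Since |C| |A| = n 2^(n-1) is a power of two, both
   factors are powers of two and the two bounds force |A| = n^2, i.e. |C| = 2^(n-1) / n. *)

From mathcomp Require Import all_boot.
From mathcomp Require Import zify.
Set Implicit Arguments. Unset Strict Implicit. Unset Printing Implicit Defensive.

Section SymmetricDifference.
Variable I : finType.
Implicit Types A B C : {set I}.

Definition symdiff A B : {set I} := (A :\: B) :|: (B :\: A).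

Lemma in_symdiff x A B : (x \in symdiff A B) = ((x \in A) != (x \in B)).
Proof. by rewrite !inE; case: (x \in A); case: (x \in B). Qed.

Lemma symdiffC A B : symdiff A B = symdiff B A.
Proof. by apply/setP=> x; rewrite !in_symdiff; case: (x \in A); case: (x \in B). Qed.

Lemma symdiff0 A : symdiff A set0 = A.
Proof. by apply/setP=> x; rewrite in_symdiff inE; case: (x \in A). Qed.

Lemma symdiffv A : symdiff A A = set0.
Proof. by apply/setP=> x; rewrite in_symdiff inE eqxx. Qed.

Lemma symdiffK C : involutive (symdiff^~ C).
Proof. by move=> A; apply/setP=> x; rewrite !in_symdiff; case: (x \in A); case: (x \in C). Qed.

Lemma symdiffDr A B C : symdiff (symdiff A C) (symdiff B C) = symdiff A B.
Proof.
by apply/setP=> x; rewrite !in_symdiff; case: (x \in A); case: (x \in B); case: (x \in C).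
Qed.

Lemma symdiff_eq0 A B : (symdiff A B == set0) = (A == B).
Proof.
apply/eqP/eqP=> [e|->]; last exact: symdiffv.
apply/setP=> x; move/setP/(_ x): e.
by rewrite in_symdiff inE /=; case: (x \in A); case: (x \in B).
Qed.

Lemma symdiff_swap A B C D : symdiff A C = symdiff B D -> symdiff A B = symdiff D C.
Proof.
move/setP=> e; apply/setP=> z; have := e z.
by rewrite !in_symdiff; case: (z \in A); case: (z \in B); case: (z \in C); case: (z \in D).
Qed.

Lemma card_symdiff A B : #|symdiff A B| + 2 * #|A :&: B| = #|A| + #|B|.
Proof.
rewrite /symdiff cardsU (_ : (A :\: B) :&: (B :\: A) = set0); last first.
  by apply/setP=> x; rewrite !inE; case: (x \in A); case: (x \in B).
rewrite cards0 subn0.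
have := cardsID B A; have := cardsID A B; rewrite setIC; lia.
Qed.

Lemma odd_symdiff A B : odd #|symdiff A B| = odd #|A| (+) odd #|B|.
Proof.
have /(congr1 odd) := card_symdiff A B; rewrite !oddD /=.
by case: (odd #|symdiff A B|); case: (odd #|A :&: B|).
Qed.

Lemma symdiff_disjoint A B : A :&: B = set0 -> symdiff A B = A :|: B.
Proof.
move/setP=> e; apply/setP=> x; have := e x.
by rewrite in_symdiff !inE /=; case: (x \in A); case: (x \in B).
Qed.

End SymmetricDifference.

Lemma leq_card_inj (T T' : finType) (D : {set T}) (E : {set T'}) (f : T -> T') :
  {in D &, injective f} -> {in D, forall x, f x \in E} -> #|D| <= #|E|.
Proof.
move=> inj sub; rewrite -(card_in_imset inj); apply: subset_leq_card.
by apply/subsetP=> y /imsetP[x xD ->]; apply: sub.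
Qed.

Lemma leq_card_bigcup (T J : finType) (W : {set J}) (F : J -> {set T}) :
  #|\bigcup_(j in W) F j| <= \sum_(j in W) #|F j|.
Proof.
elim/big_rec2: _ => [|j A m _ h]; first by rewrite cards0.
by apply: leq_trans (leq_card_setU _ _) _; rewrite leq_add2l.
Qed.

Lemma leq_card_fibers (T J : finType) (Psi : {set T * J}) K :
  (forall y, #|[set s | (y, s) \in Psi]| <= K) ->
  #|Psi| <= K * #|[set p.1 | p in Psi]|.
Proof.
move=> hK; rewrite -sum1_card (partition_big_imset fst) /=.
rewrite mulnC -sum_nat_const; apply: leq_sum => y _.
rewrite sum1dep_card; apply: leq_trans (hK y).
apply: (@leq_card_inj _ _ _ _ snd).
  by move=> [a b] [c d]; rewrite !inE /= => /andP[_ /eqP->] /andP[_ /eqP->] ->.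
by move=> [a b]; rewrite !inE /= => /andP[h /eqP <-].
Qed.

Lemma mul2_bin2 m : 2 * 'C(m, 2) = m * m.-1.
Proof. by case: m => // m; rewrite bin2 -[RHS]odd_double_half /= oddM oddS andNb mul2n. Qed.

Section SmallSets.
Variable I : finType.
Local Notation n := #|I|.
Implicit Types X T U W : {set I}.

Definition other (w : I) X := odflt w [pick x in X :\ w].

Lemma other_in X w : #|X| = 2 -> w \in X -> other w X \in X :\ w.
Proof.
move=> hX wX; have : #|X :\ w| = 1 by have := cardsD1 w X; rewrite wX hX add1n => -[].
move/eqP/cards1P=> [x ex]; rewrite /other ex.
by case: pickP => [y|/(_ x)]; rewrite ?inE ?eqxx.
Qed.

Lemma pair_other X w : #|X| = 2 -> w \in X -> X = [set w; other w X].
Proof.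
move=> hX wX; have := other_in hX wX; rewrite !inE => /andP[ow oX].
apply/eqP; rewrite eq_sym eqEcard cards2 eq_sym ow hX andbT.
by apply/subsetP=> z; rewrite !inE => /orP[] /eqP->.
Qed.

Lemma card_pairs_through w : #|[set X : {set I} | (#|X| == 2) && (w \in X)]| <= n.-1.
Proof.
rewrite -(cardsC1 w); apply: (@leq_card_inj _ _ _ _ (other w)).
  move=> X Y; rewrite !inE => /andP[/eqP hX wX] /andP[/eqP hY wY] e.
  by rewrite (pair_other hX wX) (pair_other hY wY) e.
move=> X; rewrite !inE => /andP[/eqP hX wX].
by have := other_in hX wX; rewrite !inE => /andP[].
Qed.

Lemma card_pairs_meeting W : #|[set X : {set I} | (#|X| == 2) && (X :&: W != set0)]| <= #|W| * n.-1.
Proof.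
have sub : [set X : {set I} | (#|X| == 2) && (X :&: W != set0)] \subset
    \bigcup_(w in W) [set X : {set I} | (#|X| == 2) && (w \in X)].
  apply/subsetP=> X; rewrite inE => /andP[h2 /set0Pn[w]]; rewrite inE => /andP[wX wW].
  by apply/bigcupP; exists w => //; rewrite inE h2.
apply: leq_trans (subset_leq_card sub) _; apply: leq_trans (leq_card_bigcup _ _) _.
by rewrite -sum_nat_const; apply: leq_sum => w _; apply: card_pairs_through.
Qed.

Lemma card_supersets T m : #|[set X : {set I} | (T \subset X) && (#|X| == m)]| <= 'C(n, m - #|T|).
Proof.
rewrite -card_draws; apply: (@leq_card_inj _ _ _ _ (fun X => X :\: T)).
  move=> X Y; rewrite !inE => /andP[hX _] /andP[hY _] e.
  by rewrite -(setID X T) -(setID Y T) e (setIidPr hX) (setIidPr hY).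
by move=> X; rewrite !inE => /andP[hX /eqP <-]; rewrite cardsD (setIidPr hX).
Qed.

Lemma card_subsets U m : #|[set X : {set I} | (X \subset U) && (#|X| == m)]| <= 'C(#|U|, m).
Proof. by rewrite -cards_draws; apply: subset_leq_card; apply/subsetP=> X; rewrite !inE. Qed.

Lemma card_4sets_meeting3 U :
  #|[set X : {set I} | (#|X| == 4) && (#|X :&: U| == 3)]| <= 'C(#|U|, 3) * #|~: U|.
Proof.
have ec : #|[set [set x] | x in ~: U]| = #|~: U| by apply: card_imset; apply: set1_inj.
rewrite -cards_draws -ec -cardsX.
apply: (@leq_card_inj _ _ _ _ (fun X => (X :&: U, X :&: ~: U))).
  by move=> X Y _ _ [e1 e2]; rewrite -(setID X U) -(setID Y U) !setDE e1 e2.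
move=> X; rewrite !inE => /andP[/eqP h4 /eqP h3]; rewrite /= subsetIr h3 eqxx /=.
have : #|X :&: ~: U| = 1 by have := cardsID U X; rewrite -setDE h3 h4; lia.
move/eqP/cards1P=> [x ex]; rewrite ex; apply/imsetP; exists x => //.
by have := set11 x; rewrite -ex inE => /andP[].
Qed.

Lemma card4_meet_ge3 X U : #|X| = 4 -> 3 <= #|X :&: U| -> (#|X :&: U| == 3) || (X \subset U).
Proof.
move=> h4 h3; have le4 : #|X :&: U| <= 4 by rewrite -h4 subset_leq_card ?subsetIl.
case: eqP => // ne3.
apply/orP; right; apply/setIidPl/eqP; rewrite eqEcard subsetIl h4; lia.
Qed.

Section FourSets.
Variable Q : {set {set I}}.
Hypothesis card_Q : forall X, X \in Q -> #|X| = 4.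

Lemma card_4family_cover U T : 4 <= #|U| <= 6 -> #|T| = 2 ->
  (forall X, X \in Q -> [|| T \subset X, #|X :&: U| == 3 | X \subset U]) ->
  #|Q| <= 'C(n, 2) + 20 * (n - 4) + 15.
Proof.
move=> /andP[hU4 hU6] hT cover.
have sub : Q \subset [set X : {set I} | (T \subset X) && (#|X| == 4)] :|:
    [set X : {set I} | (#|X| == 4) && (#|X :&: U| == 3)] :|:
    [set X : {set I} | (X \subset U) && (#|X| == 4)].
  apply/subsetP=> X hX; rewrite !inE card_Q // eqxx !andbT.
  by case/or3P: (cover X hX) => ->; rewrite ?orbT.
apply: leq_trans (subset_leq_card sub) _.
apply: leq_trans (leq_card_setU _ _) _; apply: leq_add.
  apply: leq_trans (leq_card_setU _ _) _; apply: leq_add.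
    by apply: leq_trans (card_supersets _ _) _; rewrite hT.
  apply: leq_trans (card_4sets_meeting3 U) _; apply: leq_mul.
    exact: leq_trans (leq_bin2l _ hU6) _.
  by have := cardsC U; lia.
by apply: leq_trans (card_subsets U 4) _; apply: leq_trans (leq_bin2l _ hU6) _.
Qed.

Hypothesis meet_Q : forall X Y, X \in Q -> Y \in Q -> 2 <= #|X :&: Y|.

Lemma card_4family : #|Q| <= 'C(n, 2) + 20 * (n - 4) + 15.
Proof.
have [->|[q0 hq0]] := set_0Vmem Q; first by rewrite cards0.
have [|no2] := boolP [exists q1 in Q, #|q0 :&: q1| == 2].
  case/existsP=> q1 /andP[hq1 /eqP c01].
  have cU := cardsUI q0 q1; rewrite c01 (card_Q hq0) (card_Q hq1) in cU.
  apply: (@card_4family_cover (q0 :|: q1) (q0 :&: q1)) => //; first lia.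
  move=> X hX; have [//|nT] := boolP (q0 :&: q1 \subset X).
  apply/orP; right; apply: card4_meet_ge3; first exact: card_Q.
  have hXT : #|X :&: (q0 :&: q1)| < 2.
    rewrite -c01 ltn_neqAle subset_leq_card ?subsetIr // andbT.
    by apply: contra nT => /eqP e; apply/setIidPr/eqP; rewrite eqEcard subsetIr e leqnn.
  have := cardsUI (X :&: q0) (X :&: q1); rewrite -setIUr setIACA setIid.
  by have := meet_Q hX hq0; have := meet_Q hX hq1; lia.
have [a [b [ha hb ab]]] : exists a b, [/\ a \in q0, b \in q0 & a != b].
  by apply/card_gt1P; rewrite card_Q.
apply: (@card_4family_cover q0 [set a; b]); [by rewrite card_Q | by rewrite cards2 ab |].
move=> X hX; apply/orP; right; apply: card4_meet_ge3; first exact: card_Q.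
have := meet_Q hX hq0; rewrite leq_eqVlt => /orP[/eqP e|//].
by move/existsP: no2; case; exists X; rewrite hX setIC -e.
Qed.

End FourSets.
End SmallSets.

Section KeyAnticodes.
Variable I : finType.

Definition key_dist (p q : {set I} * I) : nat :=
  #|symdiff p.1 q.1 :\: [set p.2; q.2]| + (if p.2 == q.2 then 0 else 2).

Definition stars (Phi : {set {set I} * I}) y := [set s | (y, s) \in Phi].

Variable Phi : {set {set I} * I}.
Hypothesis diam_Phi : {in Phi &, forall p q, p != q -> key_dist p q <= 4}.
Hypothesis even_Phi : {in Phi, forall p : {set I} * I, ~~ odd #|p.1|}.

Lemma even_symdiff p q : p \in Phi -> q \in Phi -> ~~ odd #|symdiff p.1 q.1|.
Proof. by move=> hp hq; rewrite odd_symdiff (negbTE (even_Phi hp)) (negbTE (even_Phi hq)). Qed.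

Lemma card_symdiff_le4 p q : p \in Phi -> q \in Phi -> #|symdiff p.1 q.1| <= 4.
Proof.
move=> hp hq; have [->|neq] := eqVneq p q; first by rewrite symdiffv cards0.
have := diam_Phi hp hq neq; have := even_symdiff hp hq; rewrite /key_dist.
rewrite -(cardsID [set p.2; q.2] (symdiff p.1 q.1)).
have := subset_leq_card (subsetIr (symdiff p.1 q.1) [set p.2; q.2]); rewrite cards2.
case: eqP => _ /=; move: #|_ :&: _| => c; lia.
Qed.

Lemma star_pair_in_symdiff p q : p \in Phi -> q \in Phi ->
  #|symdiff p.1 q.1| = 4 -> p.2 != q.2 -> (p.2 \in symdiff p.1 q.1) && (q.2 \in symdiff p.1 q.1).
Proof.
move=> hp hq h4 ne; have neq : p != q by apply: contraNneq ne => ->.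
have := diam_Phi hp hq neq; rewrite /key_dist (negbTE ne) addn2.
rewrite -(cardsID [set p.2; q.2] (symdiff p.1 q.1)) in h4 => h.
have : symdiff p.1 q.1 :&: [set p.2; q.2] = [set p.2; q.2].
  apply/eqP; rewrite eqEcard subsetIr cards2 ne /=.
  by move: h4 h; move: #|_ :&: _| #|_ :\: _| => a b; lia.
by move/setP=> e; have := e p.2; have := e q.2; rewrite !inE !eqxx orbT => /andP[-> _] /andP[-> _].
Qed.

Lemma stars_in_symdiff y y' s t : (y, s) \in Phi -> (y', t) \in Phi ->
  #|symdiff y y'| = 4 -> 2 <= #|stars Phi y| -> (s \in symdiff y y') && (t \in symdiff y y').
Proof.
move=> h1 h2 h4 hk; have [e|ne] := eqVneq s t; last exact: star_pair_in_symdiff h1 h2 h4 ne.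
subst t.
have [s' hs' ne'] : exists2 s', (y, s') \in Phi & s' != s.
  case/card_gt1P: hk => a [b [ha hb ab]]; rewrite !inE in ha hb.
  by have [eas|] := eqVneq a s; [exists b; rewrite // -eas eq_sym | exists a].
by have /andP[_ ->] := star_pair_in_symdiff hs' h2 h4 ne'; rewrite andbb.
Qed.

End KeyAnticodes.

Section AnticodeLayers.
Variable I : finType.
Local Notation n := #|I|.
Variable Phi : {set {set I} * I}.
Hypothesis diam_Phi : {in Phi &, forall p q, p != q -> key_dist p q <= 4}.
Hypothesis even_Phi : {in Phi, forall p : {set I} * I, ~~ odd #|p.1|}.
Variable s0 : I.
Hypothesis base : (set0, s0) \in Phi.
Local Notation nstars y := #|stars Phi y|.

Definition layer j := [set p in Phi | #|p.1| == j].
Definition supports j := [set p.1 | p in layer j].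

Lemma layerP j p : p \in layer j -> p \in Phi /\ #|p.1| = j.
Proof. by rewrite inE => /andP[h /eqP]. Qed.

Lemma n_gt0 : 0 < n.
Proof. by apply/card_gt0P; exists s0. Qed.

Lemma card_layers : #|Phi| <= #|layer 0| + #|layer 2| + #|layer 4|.
Proof.
have sub : Phi \subset layer 0 :|: layer 2 :|: layer 4.
  apply/subsetP=> p hp; rewrite !inE hp /=.
  have := card_symdiff_le4 diam_Phi even_Phi base hp; have := even_symdiff even_Phi base hp.
  by rewrite /= symdiffC symdiff0; case: #|p.1| => [|[|[|[|[|[|]]]]]].
apply: leq_trans (subset_leq_card sub) _.
by apply: leq_trans (leq_card_setU _ _) _; rewrite leq_add2r leq_card_setU.
Qed.

Lemma card_layer_fibers j K : {in layer j, forall p, nstars p.1 <= K} ->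
  #|layer j| <= K * #|supports j|.
Proof.
move=> hK; apply: leq_card_fibers => y.
have [s hs|none] := pickP (fun s => (y, s) \in layer j).
  apply: leq_trans (hK _ hs); apply: subset_leq_card; apply/subsetP=> t.
  by rewrite !inE => /andP[].
rewrite (_ : [set s | (y, s) \in layer j] = set0) ?cards0 //.
by apply/setP=> t; rewrite !inE; have := none t; rewrite inE => ->.
Qed.

Lemma card_supports j : #|supports j| <= 'C(n, j).
Proof.
rewrite -card_draws; apply: subset_leq_card; apply/subsetP=> X /imsetP[p hp ->].
by rewrite inE; case/layerP: hp => _ ->.
Qed.

Lemma card_layer0 : #|layer 0| <= nstars set0.
Proof.
apply: (@leq_card_inj _ _ _ _ snd).
  move=> [a b] [c d] /layerP[_ /= /cards0_eq ->] /layerP[_ /= /cards0_eq ->] /= -> //.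
by move=> [a b] /layerP[ha /= /cards0_eq e]; rewrite inE -e.
Qed.

Lemma stars0_sub_layer4 p : p \in layer 4 -> 2 <= nstars set0 -> stars Phi set0 \subset p.1.
Proof.
case/layerP=> hp h4 hk; apply/subsetP=> s; rewrite inE => hs.
have e : #|symdiff set0 p.1| = 4 by rewrite symdiffC symdiff0.
rewrite [p]surjective_pairing in hp.
by have /andP[] := stars_in_symdiff diam_Phi hs hp e hk; rewrite symdiffC symdiff0.
Qed.

Lemma card_supports4 : 2 <= nstars set0 -> #|supports 4| <= 'C(n, 4 - nstars set0).
Proof.
move=> hk; apply: leq_trans (card_supersets (stars Phi set0) 4).
apply: subset_leq_card; apply/subsetP=> X /imsetP[p hp ->].
by rewrite inE (stars0_sub_layer4 hp hk); case/layerP: hp => _ ->.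
Qed.

Lemma layer4_eq0 : 5 <= nstars set0 -> layer 4 = set0.
Proof.
move=> hk; apply/setP=> p; rewrite [RHS]inE; apply/negbTE/negP=> hp.
have := subset_leq_card (stars0_sub_layer4 hp (leq_trans _ hk)).
by case/layerP: hp => _ ->; move=> /(_ isT); lia.
Qed.

Lemma stars_sub_disjoint_pairs p q : p \in layer 2 -> q \in layer 2 -> 2 <= nstars p.1 ->
  p.1 :&: q.1 = set0 -> stars Phi p.1 \subset p.1 :|: q.1.
Proof.
case/layerP=> hp cp /layerP[hq cq] hk e; apply/subsetP=> s; rewrite inE => hs.
have e4 : #|symdiff p.1 q.1| = 4 by have := card_symdiff p.1 q.1; rewrite e cards0 cp cq; lia.
rewrite [q]surjective_pairing in hq.
by have /andP[] := stars_in_symdiff diam_Phi hs hq e4 hk; rewrite symdiff_disjoint.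
Qed.

Lemma layer2_meet_many_stars p q : p \in layer 2 -> q \in layer 2 -> 5 <= nstars p.1 ->
  p.1 :&: q.1 != set0.
Proof.
move=> hp hq hk; apply/eqP=> e.
have := subset_leq_card (stars_sub_disjoint_pairs hp hq (leq_trans _ hk) e).
case/layerP: hp => _ cp; case/layerP: hq => _ cq.
by rewrite cardsU e cards0 cp cq => /(_ isT); lia.
Qed.


Lemma card_setI_supports p q : p \in Phi -> q \in Phi -> #|p.1| + #|q.1| <= 4 + 2 * #|p.1 :&: q.1|.
Proof. by move=> hp hq; rewrite -card_symdiff leq_add2r (card_symdiff_le4 diam_Phi even_Phi). Qed.

Definition fold_star (p : {set I} * I) :=
  (p.1, if p.2 \in p.1 then p.2 else odflt s0 [pick x in p.1]).

Lemma fold_star_in p : p \in layer 2 -> (fold_star p).2 \in p.1.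
Proof.
case/layerP=> _ c; rewrite /fold_star /=; case: ifP => // _.
by case: pickP => // none; move: c; rewrite (eq_card0 none).
Qed.

Lemma card_layer2_stars_inside : {in layer 2, forall p, 2 <= nstars p.1 -> p.2 \in p.1} ->
  #|layer 2| <= n * n.-1.
Proof.
move=> inside.
have inj : {in layer 2 &, injective fold_star}.
  move=> [X s] [Y t] hp hq [eXY]; subst Y.
  have [hk|hk] := leqP 2 (nstars X).
    by rewrite (inside _ hp hk) (inside _ hq hk) => ->.
  move=> _; congr (_, _); move: hk; rewrite ltnS => /card_le1_eqP; apply; rewrite inE.
    by case/layerP: hq.
  by case/layerP: hp.
rewrite -(card_in_imset inj); apply: leq_trans (leq_card_fibers (K := 2) _) _.
  move=> y; have [->|[s]] := set_0Vmem [set s | (y, s) \in fold_star @: layer 2].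
    by rewrite cards0.
  rewrite inE => /imsetP[p hp [ey _]].
  rewrite ey -[X in _ <= X](layerP hp).2; apply: subset_leq_card; apply/subsetP=> t.
  by rewrite inE => /imsetP[q hq [-> ->]]; apply: fold_star_in.
rewrite -mul2_bin2 leq_mul2l /= -card_draws; apply: subset_leq_card.
apply/subsetP=> X /imsetP[q /imsetP[p hp ->] ->].
by rewrite inE /=; case/layerP: hp => _ ->.
Qed.

Lemma card_layer2_star_outside p1 : p1 \in layer 2 -> 2 <= nstars p1.1 -> p1.2 \notin p1.1 ->
  {in layer 2, forall p, nstars p.1 <= 4} -> #|layer 2| <= 12 * n.-1.
Proof.
move=> hp1 hk1 hs1 h4; apply: leq_trans (card_layer_fibers h4) _.
rewrite (_ : 12 = 4 * 3) // -mulnA leq_mul2l /=.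
have c3 : #|p1.2 |: p1.1| = 3 by rewrite cardsU1 hs1; case/layerP: hp1 => _ ->.
rewrite -c3; apply: leq_trans (card_pairs_meeting _); apply: subset_leq_card.
apply/subsetP=> X /imsetP[p hp ->]; rewrite inE.
case/layerP: (hp) => _ ->; rewrite eqxx /=.
have [e|/set0Pn[x]] := eqVneq (p1.1 :&: p.1) set0; last first.
  by rewrite inE => /andP[a b]; apply/set0Pn; exists x; rewrite !inE b a orbT.
have /subsetP/(_ p1.2) := stars_sub_disjoint_pairs hp1 hp hk1 e.
case/layerP: (hp1) => hq1 _; rewrite inE -surjective_pairing => /(_ hq1).
by rewrite inE (negbTE hs1) /= => hin; apply/set0Pn; exists p1.2; rewrite !inE eqxx hin.
Qed.

Lemma card_layer2 : {in layer 2, forall p, nstars p.1 <= 4} ->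
  #|layer 2| <= 12 * n.-1 \/ #|layer 2| <= n * n.-1.
Proof.
move=> h4; have [|none] := boolP [exists p in layer 2, (2 <= nstars p.1) && (p.2 \notin p.1)].
  by case/existsP=> p /andP[hp /andP[hk hs]]; left; apply: card_layer2_star_outside hp hk hs h4.
right; apply: card_layer2_stars_inside => p hp hk; apply/negPn/negP=> hs.
by move/existsP: none; apply; exists p; rewrite hp hk hs.
Qed.

Lemma card_lt_layer2_many_stars p1 : 5 <= nstars set0 -> p1 \in layer 2 -> 5 <= nstars p1.1 ->
  #|Phi| < 2 * n ^ 2.
Proof.
move=> hk0 hp1 hk1.
have h0 : #|layer 0| <= n by apply: leq_trans card_layer0 (max_card _).
have h2 : #|layer 2| <= n * #|supports 2| by apply: card_layer_fibers => p _; apply: max_card.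
have hY : #|supports 2| <= 2 * n.-1.
  rewrite -[X in _ <= X * _](layerP hp1).2; apply: leq_trans (card_pairs_meeting _).
  apply: subset_leq_card.
  apply/subsetP=> X /imsetP[p hp ->]; rewrite inE setIC layer2_meet_many_stars //.
  by case/layerP: hp => _ ->.
have := card_layers; rewrite layer4_eq0 // cards0.
have h2' : #|layer 2| <= n * (2 * n.-1) by rewrite (leq_trans h2) // leq_mul2l hY orbT.
have := n_gt0; nia.
Qed.

Lemma card_lt_stars_ge5 : 5 <= nstars set0 -> 7 <= n -> #|Phi| < 2 * n ^ 2.
Proof.
move=> hk hn; have [|none] := boolP [exists p in layer 2, 4 < nstars p.1].
  by case/existsP=> p /andP[hp hkp]; apply: card_lt_layer2_many_stars hk hp hkp.
have h4 : {in layer 2, forall p, nstars p.1 <= 4}.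
  move=> p hp; rewrite leqNgt; apply/negP=> hkp.
  by move/existsP: none; apply; exists p; rewrite hp hkp.
have := card_layers; rewrite layer4_eq0 // cards0 addn0.
have h0 : #|layer 0| <= n by apply: leq_trans card_layer0 (max_card _).
case: (card_layer2 h4) => h2; nia.
Qed.

Lemma card_lt_stars_le4 : {in Phi, forall p, nstars p.1 <= 4} -> 3 <= nstars set0 -> 8 <= n ->
  #|Phi| < 2 * n ^ 2.
Proof.
move=> hall hk hn.
have hall' j : {in layer j, forall p, nstars p.1 <= 4} by move=> p /layerP[hp _]; apply: hall.
have h0 : #|layer 0| <= 4 by apply: leq_trans card_layer0 (hall _ base).
have h4 : #|layer 4| <= 4 * n.
  apply: leq_trans (card_layer_fibers (hall' 4)) _; rewrite leq_mul2l /=.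
  apply: leq_trans (card_supports4 (ltnW hk)) _.
  have [->|->] : 4 - nstars set0 = 0 \/ 4 - nstars set0 = 1 by have := hall _ base; lia.
    by rewrite bin0 n_gt0.
  by rewrite bin1.
have := card_layers; case: (card_layer2 (hall' 2)) => h2; nia.
Qed.

Lemma card_lt_stars_le2 : {in Phi, forall p, nstars p.1 <= 2} -> 2 <= nstars set0 -> 2 <= n ->
  #|Phi| < 2 * n ^ 2.
Proof.
move=> hall hk hn.
have hall' j : {in layer j, forall p, nstars p.1 <= 2} by move=> p /layerP[hp _]; apply: hall.
have h0 : #|layer 0| <= 2 by apply: leq_trans card_layer0 (hall _ base).
have h2 : #|layer 2| <= 2 * 'C(n, 2).
  by apply: leq_trans (card_layer_fibers (hall' 2)) _; rewrite leq_mul2l card_supports orbT.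
have h4 : #|layer 4| <= 2 * 'C(n, 2).
  apply: leq_trans (card_layer_fibers (hall' 4)) _; rewrite leq_mul2l /=.
  apply: leq_trans (card_supports4 hk) _.
  by have := hall _ base; rewrite /= => hk2; have -> : 4 - nstars set0 = 2 by lia.
have := card_layers; have := mul2_bin2 n; nia.
Qed.

Lemma card_lt_stars_le1 : {in Phi, forall p, nstars p.1 <= 1} -> n = 8 \/ 16 <= n ->
  #|Phi| < 2 * n ^ 2.
Proof.
move=> hall hn.
have h0 : #|layer 0| <= 1 by apply: leq_trans card_layer0 (hall _ base).
have f j : #|layer j| <= #|supports j|.
  by rewrite -[X in _ <= X]mul1n; apply: card_layer_fibers => p /layerP[hp _]; apply: hall.
have := card_layers; have := f 2; have := f 4.
case: hn => [e8|h16].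
  have := card_supports 2; have := card_supports 4; rewrite e8.
  by rewrite (_ : 'C(8, 4) = 70) // (_ : 'C(8, 2) = 28) //; lia.
have [->|[q0 hq0]] := set_0Vmem (layer 4).
  by rewrite cards0; have := card_supports 2; have := mul2_bin2 n; nia.
have hq4 : #|supports 4| <= 'C(n, 2) + 20 * (n - 4) + 15.
  apply: card_4family => [X /imsetP[p /layerP[_ c] ->] // | X Y].
  move=> /imsetP[p /layerP[hp cp] ->] /imsetP[q /layerP[hq cq] ->].
  by have := card_setI_supports hp hq; rewrite cp cq; lia.
have hq2 : #|supports 2| <= 4 * n.-1.
  case/layerP: (hq0) => hq0' c0; rewrite -[X in _ <= X * _]c0.
  apply: leq_trans (card_pairs_meeting _); apply: subset_leq_card.
  apply/subsetP=> X /imsetP[p /layerP[hp c] ->]; rewrite inE c eqxx /=.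
  by apply: contraTneq (card_setI_supports hp hq0') => ->; rewrite cards0 c c0.
have := mul2_bin2 n; nia.
Qed.

Lemma card_lt_max_stars : {in Phi, forall p, nstars p.1 <= nstars set0} -> n = 8 \/ 16 <= n ->
  #|Phi| < 2 * n ^ 2.
Proof.
move=> max hn; have hn8 : 8 <= n by case: hn => [->|]; lia.
have le K : nstars set0 <= K -> {in Phi, forall p, nstars p.1 <= K}.
  by move=> hK p hp; apply: leq_trans (max p hp) hK.
have [h5|h4] := leqP 5 (nstars set0); first by apply: card_lt_stars_ge5; lia.
have [h3|h2] := leqP 3 (nstars set0); first exact: card_lt_stars_le4 (le 4 _) h3 hn8.
have [h2'|h1] := leqP 2 (nstars set0); first by apply: card_lt_stars_le2 (le 2 _) h2' _; lia.
exact: card_lt_stars_le1 (le 1 _) hn.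
Qed.

End AnticodeLayers.

Section Translation.
Variable I : finType.
Local Notation n := #|I|.

Definition translate (y0 : {set I}) (p : {set I} * I) := (symdiff p.1 y0, p.2).

Lemma translateK y0 : involutive (translate y0).
Proof. by move=> [y s]; rewrite /translate /= symdiffK. Qed.

Lemma key_dist_translate y0 p q : key_dist (translate y0 p) (translate y0 q) = key_dist p q.
Proof. by rewrite /key_dist /translate /= symdiffDr. Qed.

(* Translating by the support of a key with the most stars puts that key at the base point. *)
Lemma card_key_anticode_lt (Phi : {set {set I} * I}) :
  {in Phi &, forall p q, p != q -> key_dist p q <= 4} ->
  {in Phi, forall p : {set I} * I, ~~ odd #|p.1|} ->
  Phi != set0 -> n = 8 \/ 16 <= n -> #|Phi| < 2 * n ^ 2.
Proof.
move=> diam_Phi even_Phi /set0Pn[p0 hp0] hn.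
case: (arg_maxnP (fun p => #|stars Phi p.1|) hp0) => p hp pmax.
have {}hp : p \in Phi := hp.
have tK := translateK p.1; set Psi := translate p.1 @: Phi.
have memPsi q : (q \in Psi) = (translate p.1 q \in Phi) by rewrite /Psi (can_imset_pre _ tK) inE.
have starsPsi y : stars Psi y = stars Phi (symdiff y p.1).
  by apply/setP=> s; rewrite !inE memPsi.
rewrite -(card_imset _ (inv_inj tK)) -/Psi.
apply: (@card_lt_max_stars _ Psi _ _ p.2) => //.
- move=> q r; rewrite !memPsi => hq hr ne; rewrite -(key_dist_translate p.1).
  by apply: diam_Phi => //; apply: contra ne => /eqP/(inv_inj tK)->.
- move=> q; rewrite memPsi => /even_Phi; rewrite odd_symdiff (negbTE (even_Phi _ hp)).
  by rewrite addbF.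
- by rewrite memPsi /translate /= symdiffC symdiff0 -surjective_pairing.
- by move=> q; rewrite memPsi !starsPsi [symdiff set0 _]symdiffC symdiff0 => /pmax.
Qed.

End Translation.

Section EvenSets.
Variable I : finType.
Variable x0 : I.
Local Notation n := #|I|.

Definition even_sets := [set y : {set I} | ~~ odd #|y|].

Lemma card_even_setsC : #|~: even_sets| = #|even_sets|.
Proof.
have tK := symdiffK [set x0].
rewrite -(card_imset _ (inv_inj tK)) (can_imset_pre _ tK); apply: eq_card => y.
by rewrite !inE odd_symdiff cards1 addbT negbK.
Qed.

Lemma card_even_sets : #|even_sets| = 2 ^ n.-1.
Proof.
have := cardsC even_sets; rewrite card_even_setsC -cardsT -powersetT card_powerset cardsT.
have /prednK <- : 0 < n by apply/card_gt0P; exists x0.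
by rewrite expnS /=; lia.
Qed.

Lemma card_odd_sets : #|~: even_sets| = 2 ^ n.-1.
Proof. by rewrite card_even_setsC card_even_sets. Qed.

End EvenSets.

Lemma val_star : val star = 2.
Proof. by rewrite /star /= inordK. Qed.

Lemma val_nonstar (x : 'I_3) : x != star -> (val x == 0) || (val x == 1).
Proof.
move=> h; have : val x != 2 by apply: contra h => /eqP e; apply/eqP/val_inj; rewrite e val_star.
by case: x h => x hx /= _; lia.
Qed.

Section WordKeys.
Variable n : nat.
(* [x0] is a junk default: [star_pos w] is meaningful only for [w \in Xn n]. *)
Variable x0 : 'I_n.
Implicit Types u v w : word n.

Definition star_pos w : 'I_n := odflt x0 [pick i | w i == star].
Definition ones w : {set 'I_n} := [set i | val (w i) == 1].
Definition support w := if odd #|ones w| then star_pos w |: ones w else ones w.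
Definition word_key w := (support w, star_pos w).

Lemma star_posP w : w \in Xn n -> forall i, (w i == star) = (i == star_pos w).
Proof.
rewrite inE => /cards1P[s /setP es].
have hs i : (w i == star) = (i == s) by have := es i; rewrite !inE.
suff -> : star_pos w = s by [].
by rewrite /star_pos; case: pickP => [i|/(_ s)]; rewrite hs ?eqxx // => /eqP.
Qed.

Lemma star_pos_notin_ones w : w \in Xn n -> star_pos w \notin ones w.
Proof. by move=> hw; rewrite inE (eqP (_ : w _ == star)) ?val_star ?(star_posP hw). Qed.

Lemma mem_support w i : w \in Xn n -> i != star_pos w -> (i \in support w) = (val (w i) == 1).
Proof. by move=> hw ne; rewrite /support; case: ifP => _; rewrite !inE ?(negbTE ne). Qed.

Lemma even_support w : w \in Xn n -> ~~ odd #|support w|.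
Proof.
move=> hw; rewrite /support; case: ifP => [h|->] //.
by rewrite cardsU1 (star_pos_notin_ones hw) /= h.
Qed.

Lemma eq_nonstar (a b : 'I_3) : a != star -> b != star -> (a == b) = ((val a == 1) == (val b == 1)).
Proof.
move=> /val_nonstar ha /val_nonstar hb; rewrite -val_eqE.
by move: ha hb; case: (val a) => [|[|]]; case: (val b) => [|[|]].
Qed.

Lemma word_key_inj : {in Xn n &, injective word_key}.
Proof.
move=> u v hu hv [e1 e2]; apply/ffunP=> i.
have [ei|ne] := eqVneq i (star_pos u).
  have /eqP -> : u i == star by rewrite (star_posP hu) ei.
  by have /eqP -> : v i == star by rewrite (star_posP hv) -e2 ei.
have ne' : i != star_pos v by rewrite -e2.
apply/eqP; rewrite eq_nonstar ?(star_posP hu) ?(star_posP hv) //.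
by rewrite -(mem_support hu ne) -(mem_support hv ne') e1.
Qed.

Lemma neq_coord u v i : u \in Xn n -> v \in Xn n ->
  (u i != v i) = (i \in symdiff (support u) (support v) :\: [set star_pos u; star_pos v])
    || (i \in [set star_pos u; star_pos v]) && (star_pos u != star_pos v).
Proof.
move=> hu hv; have Hu := star_posP hu i; have Hv := star_posP hv i; rewrite !inE.
have [eu|nu] := eqVneq i (star_pos u); have [ev|nv] := eqVneq i (star_pos v).
- have /eqP -> : u i == star by rewrite Hu eu.
  have /eqP -> : v i == star by rewrite Hv ev.
  by rewrite -ev -eu !eqxx /= ?andbF.
- have /eqP -> : u i == star by rewrite Hu eu.
  by rewrite eq_sym Hv -eu (negbTE nv).
- have /eqP -> : v i == star by rewrite Hv ev.
  by rewrite Hu -ev [_ == i]eq_sym nu.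
- rewrite /= orbF (mem_support hu nu) (mem_support hv nv) eq_nonstar ?Hu ?Hv //.
  by case: (val (u i) == 1); case: (val (v i) == 1).
Qed.

Lemma hdist_word_key u v : u \in Xn n -> v \in Xn n ->
  hdist u v = key_dist (word_key u) (word_key v).
Proof.
move=> hu hv; rewrite /hdist /key_dist /=.
set D := _ :\: _; set W := [set star_pos u; star_pos v].
have -> : [set i | u i != v i] = D :|: [set i in W | star_pos u != star_pos v].
  by apply/setP=> i; rewrite inE neq_coord // !inE.
rewrite cardsU (_ : D :&: _ = set0) ?cards0 ?subn0; last first.
  by apply/setP=> i; rewrite !inE; case: (_ || _); rewrite ?andbF.
have [_|ne] := eqVneq (star_pos u) (star_pos v).
  by rewrite (_ : [set i in W | _] = set0) ?cards0 //; apply/setP=> i; rewrite !inE andbF.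
rewrite (_ : [set i in W | _] = W) /W ?cards2 ?ne //.
by apply/setP=> i; rewrite !inE andbT.
Qed.

Definition word_of_key (y : {set 'I_n}) (s : 'I_n) : word n :=
  [ffun i => if i == s then star else if i \in y then inord 1 else inord 0].

Lemma word_of_key_Xn (y : {set 'I_n}) (s : 'I_n) : word_of_key y s \in Xn n.
Proof.
rewrite inE; apply/cards1P; exists s; apply/setP=> i; rewrite !inE ffunE.
case: (i == s); first by rewrite eqxx.
by case: (i \in y); apply/eqP=> /(congr1 val); rewrite /= !inordK.
Qed.

Lemma word_of_keyK (y : {set 'I_n}) (s : 'I_n) : ~~ odd #|y| -> word_key (word_of_key y s) = (y, s).
Proof.
move=> hy; have hX := word_of_key_Xn y s.
have hs : star_pos (word_of_key y s) = s by apply/esym/eqP; rewrite -(star_posP hX) ffunE eqxx.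
have ho : ones (word_of_key y s) = y :\ s.
  apply/setP=> i; rewrite !inE ffunE; have [->|ne] := eqVneq i s; first by rewrite val_star.
  by case: (i \in y); rewrite /= inordK.
rewrite /word_key /support hs ho; congr (_, _); have [ys|yns] := boolP (s \in y).
  have c : #|y :\ s|.+1 = #|y| by have := cardsD1 s y; rewrite ys add1n.
  by rewrite -c /= in hy; rewrite (negPn hy) setD1K.
by rewrite (setDidPl _) ?(negbTE hy) // disjoint_sym disjoints1.
Qed.

Lemma word_key_Xn : word_key @: Xn n = setX (even_sets 'I_n) [set: 'I_n].
Proof.
apply/setP=> [[y s]]; rewrite !inE andbT; apply/imsetP/idP => [[w hw [-> _]]|hy].
  exact: even_support.
by exists (word_of_key y s); rewrite ?word_of_key_Xn ?word_of_keyK.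
Qed.

Lemma card_Xn : #|Xn n| = n * 2 ^ n.-1.
Proof.
rewrite -(card_in_imset word_key_inj) word_key_Xn cardsX cardsT card_ord.
by rewrite (card_even_sets x0) card_ord mulnC.
Qed.

End WordKeys.

Lemma key_dist_le4 (I : finType) (p q : {set I} * I) :
  #|symdiff p.1 q.1| <= 2 -> key_dist p q <= 4.
Proof.
rewrite /key_dist => h; have := subset_leq_card (subsetDl (symdiff p.1 q.1) [set p.2; q.2]).
by case: (p.2 == q.2); lia.
Qed.

Section Bounds.
Variable n : nat.
Variable x0 : 'I_n.
Local Notation support := (support x0).
Local Notation word_key := (word_key x0).

(* Sphere packing: the sets [support c] toggled in one coordinate are distinct odd sets. *)
Lemma card_code_le (C : {set word n}) :
  C \subset Xn n -> min_dist_ge 5 C -> #|C| * n <= 2 ^ n.-1.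
Proof.
move=> CX md; have CX' := subsetP CX.
rewrite -[n in _ * n]card_ord -cardsT -cardsX -[n in 2 ^ n.-1]card_ord -(card_odd_sets x0).
apply: (@leq_card_inj _ _ _ _ (fun p => symdiff (support p.1) [set p.2])); last first.
  move=> [c i]; rewrite !inE /= andbT => hc.
  by rewrite odd_symdiff cards1 (negbTE (even_support x0 (CX' _ hc))).
move=> [c i] [c' j]; rewrite !inE /= !andbT => hc hc' /symdiff_swap e.
have [same|ne] := eqVneq c c'; last first.
  have := md _ _ hc hc' ne; rewrite (hdist_word_key x0 (CX' _ hc) (CX' _ hc')).
  rewrite leqNgt ltnS key_dist_le4 //= e.
  apply: leq_trans (subset_leq_card _) (card_size [:: j; i]).
  by apply/subsetP=> z; rewrite in_symdiff !inE; case: (z == j); case: (z == i).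
subst c'; rewrite symdiffv in e; move/eqP: e; rewrite eq_sym symdiff_eq0 => /eqP /setP/(_ i).
by rewrite !inE eqxx => /eqP ->.
Qed.

Lemma card_anticode_lt (A : {set word n}) :
  A \subset Xn n -> diam_le 4 A -> A != set0 -> n = 8 \/ 16 <= n -> #|A| < 2 * n ^ 2.
Proof.
move=> AX dA Ane hn; have AX' := subsetP AX.
have kinj : {in A &, injective word_key} by move=> u v /AX' hu /AX' hv; apply: word_key_inj.
rewrite -(card_in_imset kinj) -[n in _ < 2 * n ^ 2]card_ord.
apply: card_key_anticode_lt; rewrite ?card_ord //.
- move=> p q /imsetP[u hu ->] /imsetP[v hv ->] _.
  by rewrite -hdist_word_key ?AX' //; apply: dA.
- by move=> p /imsetP[u hu ->]; apply: even_support; apply: AX'.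
- by case/set0Pn: Ane => u hu; apply/set0Pn; exists (word_key u); apply: imset_f.
Qed.

End Bounds.

Lemma pow2_squeeze m k c a : c * a = 2 ^ (m + k) -> a < 2 ^ (2 * m).+1 ->
  c * 2 ^ m <= 2 ^ k -> c = 2 ^ k %/ 2 ^ m.
Proof.
move=> hca ha hc.
have [x ltx ec] : exists2 x, x <= m + k & c = 2 ^ x.
  by apply/dvdn_pfactor => //; rewrite -hca dvdn_mulr.
rewrite {c}ec in hca hc *.
have ea : a = 2 ^ (m + k - x).
  by apply/eqP; rewrite -(eqn_pmul2l (expn_gt0 2 x)) hca -expnD subnKC.
rewrite ea ltn_exp2l // in ha; rewrite -expnD leq_exp2l // in hc.
by rewrite -expnB //; [congr (_ ^ _) | ]; lia.
Qed.

Theorem theorem2 (m : nat) (C : {set word (2 ^ m)}) :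
  3 <= m ->
  diameter_perfect 5 C ->
  #|C| = 2 ^ (2 ^ m - 1) %/ 2 ^ m.
Proof.
move=> hm [CX [md [A [AX [dA cardCA]]]]].
pose x0 := Ordinal (expn_gt0 2 m : 0 < 2 ^ m).
have cardX := card_Xn x0.
have Ane : A != set0.
  apply/eqP=> A0; move: cardCA; rewrite A0 cards0 muln0 cardX => /esym/eqP.
  by rewrite muln_eq0 !expn_eq0.
have hn : 2 ^ m = 8 \/ 16 <= 2 ^ m.
  have [<-|hm4] := eqVneq 3 m; [by left | right].
  by rewrite (_ : 16 = 2 ^ 4) // leq_exp2l //; lia.
have hA : #|A| < 2 ^ (2 * m).+1.
  by rewrite expnS [2 * m]mulnC expnM; apply: card_anticode_lt.
apply: (pow2_squeeze _ hA); last first.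
  by rewrite subn1; apply: card_code_le.
by rewrite cardCA cardX expnD subn1.
Qed.
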